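(* For all $n$, $\mathrm{Sort}_n(132,321)=\mathrm{Av}_n(123,132^{\star})$.
   Context: $\mathrm{Av}_n(123,132^{\star})$ is the set of $x\in S_n$ that avoid the classical pattern $123$ (no subsequence order-isomorphic to $123$) and the bivincular pattern $132^{\star}$, where an occurrence of $132^{\star}$ in $x=x_1\cdots x_n$ is a pair of indices $a<b<n$ with $x_a<x_{b+1}$ and $x_b=x_{b+1}+1$. For a set $T$ of patterns, the map $s_T$ is defined as follows: the entries of the input permutation are read from left to right, with an initially empty stack. At each step, if the input is nonempty and pushing the next input entry onto the stack produces a stack whose contents, read from top to bottom, avoid every pattern in $T$, that entry is pushed; otherwise the top entry of the stack is popped and appended to the output. When the input is exhausted, the remaining stack entries are popped one at a time to the output. Write $s_{\sigma,\tau}=s_{\{\sigma,\tau\}}$ and $s=s_{\{21\}}$ (West's stack-sorting map). $\mathrm{Sort}_n(\sigma,\tau)$ is the set of $x\in S_n$ with $s(s_{\sigma,\tau}(x))=12\cdots n$. *)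

(* Permutations of size n are sequences of naturals that are
   rearrangements of 1..n. *)
From mathcomp Require Import all_boot.
Set Implicit Arguments. Unset Strict Implicit. Unset Printing Implicit Defensive.

Definition is_perm (n : nat) (x : seq nat) : bool := perm_eq x (iota 1 n).

Fixpoint subseqs (s : seq nat) : seq (seq nat) :=
  if s is a :: s' then [seq a :: t | t <- subseqs s'] ++ subseqs s' else [:: [::]].

Definition order_iso (t p : seq nat) : bool :=
  (size t == size p) &&
  all (fun i => all (fun j =>
     (nth 0 t i < nth 0 t j) == (nth 0 p i < nth 0 p j)) (iota 0 (size p)))
      (iota 0 (size p)).

Definition contains (s p : seq nat) : bool := has (order_iso ^~ p) (subseqs s).

Definition avoids (s p : seq nat) : bool := ~~ contains s p.

Definition avoids_all (T : seq (seq nat)) (s : seq nat) : bool :=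
  all (avoids s) T.

(* The stack is a list whose head is
   the top, so the stack read from top to bottom is the list itself.
   Each step consumes an input entry or a stack entry, so fuel 2*|input|
   suffices.  (The branch "push forbidden but stack empty" cannot occur for
   sets of patterns of length >= 2; there we push anyway.) *)
Fixpoint stack_run (T : seq (seq nat)) (fuel : nat) (inp stk out : seq nat)
  : seq nat :=
  match fuel with
  | 0 => out ++ stk
  | f.+1 =>
    match inp with
    | [::] => out ++ stk
    | a :: inp' =>
      if avoids_all T (a :: stk) then stack_run T f inp' (a :: stk) out
      else match stk with
           | [::] => stack_run T f inp' [:: a] out
           | b :: stk' => stack_run T f inp stk' (rcons out b)
           end
    end
  end.

Definition sT (T : seq (seq nat)) (x : seq nat) : seq nat :=
  stack_run T (2 * size x) x [::] [::].

Definition west (x : seq nat) : seq nat := sT [:: [:: 2; 1]] x.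

Definition in_Sort_132_321 (n : nat) (x : seq nat) : bool :=
  is_perm n x && (west (sT [:: [:: 1; 3; 2]; [:: 3; 2; 1]] x) == iota 1 n).

(* occurrence of the bivincular pattern 132star: indices a < b < n (1-based)
   with x_a < x_{b+1} and x_b = x_{b+1} + 1; here 0-based. *)
Definition contains_132star (x : seq nat) : bool :=
  has (fun b => has (fun a =>
         (nth 0 x a < nth 0 x b.+1) && (nth 0 x b == (nth 0 x b.+1).+1))
       (iota 0 b))
    (iota 0 (size x).-1).

Definition in_Av_123_132star (n : nat) (x : seq nat) : bool :=
  [&& is_perm n x, avoids x [:: 1; 2; 3] & ~~ contains_132star x].

From mathcomp Require Import all_boot zify.
Set Implicit Arguments. Unset Strict Implicit. Unset Printing Implicit Defensive.

(* By Knuth's theorem, West's stack sort fixes exactly the 231-avoiding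
   permutations, so the claim is that s_{132,321}(x) avoids 231 iff x avoids
   123 and 132*.

   If x avoids both, then after reading a prefix the stack of s_{132,321}
   holds the left-to-right minima of the prefix, increasing from the top,
   possibly with the last entry read on top of them.  The next entry a always
   pops that extra entry l, because some left-to-right minimum v with
   a < v < l lies below it (the minimum of the prefix if a is itself a
   left-to-right minimum, and otherwise v = a+1, which lies before a by
   123-avoidance and differs from l by 132*-avoidance).  By 123-avoidance the
   popped entries decrease, so the output is a decreasing sequence followed
   by an increasing one, which avoids 231.

   Conversely, let w be the minimum of an initial segment of x ending with
   the first entry of an occurrence of 123, or of 132* (whose last two entries
   are adjacent and equal to a+1 and a).  The stack below w increases from the
   top, so w is never popped.  For 123 with later entries b < c, the entry b
   leaves the stack before c is pushed, since c b w would be a 321 in the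
   stack; for 132*, a+1 and then a are pushed onto w.  The output thus
   contains the 231 occurrence b c w, respectively a (a+1) w. *)

Local Notation T21 := [:: [:: 2; 1]].
Local Notation T132_321 := [:: [:: 1; 3; 2]; [:: 3; 2; 1]].

Lemma subseq_consE (T : eqType) (x y : T) s1 s2 :
  subseq (x :: s1) (y :: s2) = if x == y then subseq s1 s2 else subseq (x :: s1) s2.
Proof. by rewrite /=; case: eqP. Qed.

Lemma subseq_behead (T : eqType) (x y : T) s1 s2 : subseq (x :: s1) (y :: s2) -> subseq s1 s2.
Proof. by rewrite subseq_consE; case: eqP => // _ /cons_subseq. Qed.

Lemma subseq_cons_split (T : eqType) (a : T) t s :
  subseq (a :: t) s -> exists s1 s2, s = s1 ++ a :: s2 /\ subseq t s2.
Proof.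
elim: s => [|b s IH] //=; case: eqP => [-> ts|_ /IH [s1 [s2 [-> ts2]]]].
  by exists [::], s.
by exists (b :: s1), s2.
Qed.

Lemma subseq_cat_split (T : eqType) (s s1 s2 : seq T) : subseq s (s1 ++ s2) ->
  exists t1 t2, [/\ s = t1 ++ t2, subseq t1 s1 & subseq t2 s2].
Proof.
elim: s1 s => [|a s1 IH] s; first by exists [::], s; rewrite sub0seq.
case: s => [|u s]; first by exists [::], [::]; rewrite !sub0seq.
rewrite cat_cons subseq_consE.
case: eqP => [-> /IH [t1 [t2 [-> ? ?]]]|_ /IH [t1 [t2 [-> ? ?]]]].
  by exists (a :: t1), t2; rewrite subseq_consE eqxx.
by exists t1, t2; split => //; apply: subseq_trans (subseq_cons _ _).
Qed.

Lemma subseq_pair_cat (T : eqType) (u v : T) s1 s2 :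
  u \in s1 -> v \in s2 -> subseq [:: u; v] (s1 ++ s2).
Proof. by rewrite -!sub1seq; apply: cat_subseq. Qed.

Lemma mem_subseq_pair (T : eqType) (u v : T) s :
  subseq [:: u; v] s -> (u \in s) && (v \in s).
Proof. by move/mem_subseq => sub; rewrite !sub // !inE eqxx ?orbT. Qed.

Lemma subseq_rcons_neq (T : eqType) (s p : seq T) y z :
  subseq (rcons s y) (rcons p z) -> y != z -> subseq (rcons s y) p.
Proof.
move=> sub /negbTE yz; move: sub; rewrite -subseq_rev !rev_rcons subseq_consE yz.
by rewrite -rev_rcons subseq_rev.
Qed.

Lemma mem_rcons_last (T : eqType) (s : seq T) z : z \in s ++ [:: z].
Proof. by rewrite mem_cat mem_head orbT. Qed.

Lemma sorted_rcons (T : eqType) (r : rel T) s a :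
  sorted r s -> {in s, forall z, r z a} -> sorted r (rcons s a).
Proof. by case: s => //= z s ps za; rewrite rcons_path ps za ?mem_last. Qed.

Lemma perm_iota_sortedE m n y : perm_eq y (iota m n) -> (y == iota m n) = sorted ltn y.
Proof.
move=> py; apply/idP/idP => [/eqP ->|sy]; first exact: iota_ltn_sorted.
by apply/eqP/(irr_sorted_eq ltn_trans ltnn sy (iota_ltn_sorted m n)); apply: perm_mem.
Qed.

Lemma split_at_min (l : seq nat) : l != [::] ->
  exists t1 w t2, [/\ l = t1 ++ w :: t2, {in t1, forall z, w < z} & {in l, forall z, w <= z}].
Proof.
elim: l => [|a l IH] // _; case: (eqVneq l [::]) => [->|/IH [t1 [w [t2 [lE t1_gt l_ge]]]]].
  by exists [::], a, [::]; split => // z; rewrite inE => /eqP ->.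
case: (ltnP w a) => [wa|aw].
  exists (a :: t1), w, t2; split; first by rewrite lE.
    by move=> z; rewrite inE => /predU1P [->|/t1_gt].
  by move=> z; rewrite inE => /predU1P [->|/l_ge //]; apply: ltnW.
exists [::], a, l; split => // z; rewrite inE => /predU1P [-> //|/l_ge wz].
exact: leq_trans aw wz.
Qed.

(** * Classical patterns *)

Lemma mem_subseqs s t : (t \in subseqs s) = subseq t s.
Proof.
elim: s t => [|a s IH] [|b t] //=; rewrite mem_cat IH ?sub0seq ?orbT //.
have cons_inj : injective (cons a) by move=> ? ? [].
case: (eqVneq b a) => [->|ne].
  rewrite (mem_map cons_inj) IH.
  by apply/orP/idP => [[//|/cons_subseq //]|]; left.
have -> // : (b :: t \in [seq a :: u | u <- subseqs s]) = false.
by apply/mapP => [[? _ [eba _]]]; rewrite eba eqxx in ne.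
Qed.

Lemma containsP s p : reflect (exists2 t, subseq t s & order_iso t p) (contains s p).
Proof.
by apply: (iffP hasP) => [[t]|[t]]; rewrite ?mem_subseqs; exists t; rewrite ?mem_subseqs.
Qed.

Lemma contains_subseq s1 s2 p : subseq s1 s2 -> contains s1 p -> contains s2 p.
Proof.
by move=> s12 /containsP [t ts1 tp]; apply/containsP; exists t; first exact: subseq_trans s12.
Qed.

Lemma contains2P s p (r : rel nat) : size p = 2 ->
  (forall u v, order_iso [:: u; v] p = r u v) ->
  reflect (exists u v, subseq [:: u; v] s /\ r u v) (contains s p).
Proof.
move=> sp isoE; apply: (iffP (containsP s p)) => [[t ts tp]|[u [v [uvs ruv]]]].
  move: (tp) => /andP [/eqP st _]; rewrite sp in st.
  by case: t st ts tp => [|u [|v []]] // _ ts; rewrite isoE; exists u, v.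
by exists [:: u; v]; rewrite ?isoE.
Qed.

Lemma contains3P s p (r : nat -> nat -> nat -> bool) : size p = 3 ->
  (forall u v w, order_iso [:: u; v; w] p = r u v w) ->
  reflect (exists u v w, subseq [:: u; v; w] s /\ r u v w) (contains s p).
Proof.
move=> sp isoE; apply: (iffP (containsP s p)) => [[t ts tp]|[u [v [w [uvws ruvw]]]]].
  move: (tp) => /andP [/eqP st _]; rewrite sp in st.
  by case: t st ts tp => [|u [|v [|w []]]] // _ ts; rewrite isoE; exists u, v, w.
by exists [:: u; v; w]; rewrite ?isoE.
Qed.

Ltac order_iso_tac := move=> *; rewrite /order_iso /=;
  do ![case: ltngtP => ? //=]; lia.

Lemma contains21P s :
  reflect (exists u v, subseq [:: u; v] s /\ v < u) (contains s [:: 2; 1]).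
Proof. by apply: (@contains2P s [:: 2; 1] (fun u v => v < u) erefl); order_iso_tac. Qed.

Lemma contains123P s :
  reflect (exists u v w, subseq [:: u; v; w] s /\ u < v < w) (contains s [:: 1; 2; 3]).
Proof. by apply: (@contains3P s [:: 1; 2; 3] (fun u v w => u < v < w) erefl); order_iso_tac. Qed.

Lemma contains132P s :
  reflect (exists u v w, subseq [:: u; v; w] s /\ u < w < v) (contains s [:: 1; 3; 2]).
Proof. by apply: (@contains3P s [:: 1; 3; 2] (fun u v w => u < w < v) erefl); order_iso_tac. Qed.

Lemma contains231P s :
  reflect (exists u v w, subseq [:: u; v; w] s /\ w < u < v) (contains s [:: 2; 3; 1]).
Proof. by apply: (@contains3P s [:: 2; 3; 1] (fun u v w => w < u < v) erefl); order_iso_tac. Qed.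

Lemma contains321P s :
  reflect (exists u v w, subseq [:: u; v; w] s /\ w < v < u) (contains s [:: 3; 2; 1]).
Proof. by apply: (@contains3P s [:: 3; 2; 1] (fun u v w => w < v < u) erefl); order_iso_tac. Qed.

Lemma avoids21_sorted s : uniq s -> avoids s [:: 2; 1] -> sorted ltn s.
Proof.
elim: s => [|a s IH] //= /andP [a_notin us] no21.
rewrite (path_sortedE ltn_trans) IH //; last first.
  by apply: contraNN no21; apply: contains_subseq (subseq_cons s a).
rewrite andbT; apply/allP => z zs.
have az : a != z by apply: contraNneq a_notin => ->.
rewrite ltn_neqAle az /= leqNgt.
apply: contraNN no21 => za; apply/contains21P; exists a, z.
by rewrite /= eqxx sub1seq.
Qed.

Lemma dec_inc_avoids231 D I : sorted gtn D -> sorted ltn I -> avoids (D ++ I) [:: 2; 3; 1].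
Proof.
move=> sD sI; apply/contains231P => [[u [v [w [/subseq_cat_split [t1 [t2 [uvwE t1D t2I]]]]]]]].
have := subseq_sorted (rev_trans ltn_trans) t1D sD; have := subseq_sorted ltn_trans t2I sI.
by case: t1 t2 uvwE {t1D t2I} => [|? [|? [|? []]]] [|? [|? [|? []]]] //= [-> -> ->] /=; lia.
Qed.

Lemma contains_132starP x : reflect
  (exists p a q, x = p ++ [:: a.+1, a & q] /\ has (fun w => w < a) p) (contains_132star x).
Proof.
apply: (iffP hasP) => [[b]|[p [a [q [-> /hasP [w wp wa]]]]]].
  rewrite mem_iota => /andP [_ b_lt] /hasP [i].
  rewrite mem_iota => /andP [_ ib] /andP [lt /eqP succ].
  have b1_lt : b.+1 < size x by move: b_lt; case: (size x) => //= n; lia.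
  exists (take b x), (nth 0 x b.+1), (drop b.+2 x); split.
    by rewrite -succ -!drop_nth ?cat_take_drop // ltnW.
  apply/hasP; exists (nth 0 x i) => //.
  by rewrite -(nth_take 0 ib) mem_nth // size_takel // ltnW // ltnW.
have ps : size p < size p + (size q).+1 by rewrite addnS ltnS leq_addr.
exists (size p); first by rewrite mem_iota size_cat /= addnS.
apply/hasP; exists (index w p); first by rewrite mem_iota index_mem wp.
rewrite !nth_cat index_mem wp nth_index // ltnn subnn.
have -> : (size p).+1 < size p = false by rewrite ltnNge leqnSn.
by rewrite subSnn /= eqxx andbT.
Qed.

Lemma avoids_all_21 s : avoids_all T21 s = avoids s [:: 2; 1].
Proof. by rewrite /avoids_all /= andbT. Qed.

Lemma avoids_all_132_321 s :
  avoids_all T132_321 s = avoids s [:: 1; 3; 2] && avoids s [:: 3; 2; 1].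
Proof. by rewrite /avoids_all /= andbT. Qed.

(** * Pattern-avoiding stack machines *)

Section StackMachine.

Variable T : seq (seq nat).

Fixpoint feed (a : nat) (stk out : seq nat) : seq nat * seq nat :=
  if avoids_all T (a :: stk) then (a :: stk, out)
  else if stk is b :: stk' then feed a stk' (rcons out b) else ([:: a], out).

Definition step (st : seq nat * seq nat) a := feed a st.1 st.2.

Definition flush (st : seq nat * seq nat) := st.2 ++ st.1.

Definition run (p : seq nat) := foldl step ([::], [::]) p.

Lemma stack_runE f inp stk out : 2 * size inp + size stk <= f ->
  stack_run T f inp stk out = flush (foldl step (stk, out) inp).
Proof.
elim: f inp stk out => [|f IH] [|a inp] stk out //= fuel.
rewrite /step; case: stk fuel => [|b stk] /= fuel; case: ifP => _; rewrite IH //=; lia.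
Qed.

Lemma sT_run x : sT T x = flush (run x).
Proof. by rewrite /sT stack_runE // addn0. Qed.

Lemma run_rcons p a : run (rcons p a) = step (run p) a.
Proof. by rewrite /run -cats1 foldl_cat. Qed.

Lemma run_cat p q : run (p ++ q) = foldl step (run p) q.
Proof. by rewrite /run foldl_cat. Qed.

Lemma feed_push a stk out : avoids_all T (a :: stk) -> feed a stk out = (a :: stk, out).
Proof. by case: stk => [|b stk] /= ->. Qed.

Lemma feed_pop a b stk out : ~~ avoids_all T [:: a, b & stk] ->
  feed a (b :: stk) out = feed a stk (rcons out b).
Proof. by move=> /= /negbTE ->. Qed.

Lemma feedE a stk out : exists j,
  feed a stk out = (a :: drop j stk, out ++ take j stk) /\
  (avoids_all T (a :: drop j stk) \/ drop j stk = [::]).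
Proof.
elim: stk out => [|b stk IH] out /=.
  by exists 0; rewrite cats0; case: ifP; split; auto.
case: ifP => [pushed|_]; first by exists 0; rewrite drop0 take0 cats0; auto.
by have [j [-> pushed]] := IH (rcons out b); exists j.+1; rewrite /= cat_rcons.
Qed.

Lemma step_stack st a : exists D, [/\ (step st a).1 = a :: D,
  avoids_all T (a :: D) \/ D = [::] & {subset D <= st.1}].
Proof.
have [j [stepE pushed]] := feedE a st.1 st.2.
by exists (drop j st.1); rewrite /step stepE; split => // z /(mem_subseq (drop_subseq _ _)).
Qed.

Lemma flush_step_perm st a : perm_eq (flush (step st a)) (rcons (flush st) a).
Proof.
case: st => stk out; rewrite /step /=; have [j [-> _]] := feedE a stk out.
rewrite /flush /= -cats1 -!catA perm_cat2l -{3}(cat_take_drop j stk) -catA perm_cat2l.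
by rewrite -cat1s perm_catC.
Qed.

Lemma flush_foldl_perm st p : perm_eq (flush (foldl step st p)) (flush st ++ p).
Proof.
elim: p st => [|a p IH] st /=; first by rewrite cats0.
by apply: perm_trans (IH _) _; rewrite -cat1s catA perm_cat2r cats1 flush_step_perm.
Qed.

Lemma flush_run_perm p : perm_eq (flush (run p)) p.
Proof. exact: flush_foldl_perm. Qed.

Lemma sT_perm x : perm_eq (sT T x) x.
Proof. by rewrite sT_run flush_run_perm. Qed.

Lemma uniq_stack_run p : uniq p -> uniq (run p).1.
Proof.
by rewrite -(perm_uniq (flush_run_perm p)) /flush cat_uniq => /and3P [].
Qed.

Lemma mem_stack_run p z : z \in (run p).1 -> z \in p.
Proof. by rewrite -(perm_mem (flush_run_perm p)) /flush mem_cat => ->; rewrite orbT. Qed.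

Lemma flush_step_subseq st a : subseq (flush st) (flush (step st a)).
Proof.
case: st => stk out; rewrite /step /=; have [j [-> _]] := feedE a stk out.
rewrite /flush /= -{1}(cat_take_drop j stk) -!catA !subseq_cat2l -cat1s.
exact: suffix_subseq.
Qed.

Lemma flush_foldl_subseq st p : subseq (flush st) (flush (foldl step st p)).
Proof.
elim: p st => [|a p IH] st /=; first exact: subseq_refl.
exact: subseq_trans (flush_step_subseq _ _) (IH _).
Qed.

Lemma flush_run_subseq_sT p q : subseq (flush (run p)) (sT T (p ++ q)).
Proof. by rewrite sT_run run_cat; apply: flush_foldl_subseq. Qed.

Lemma flush_foldl_prefix st p : exists r, flush (foldl step st p) = st.2 ++ r.
Proof.
elim: p st => [|a p IH] st /=; first by exists st.1.
have [r ->] := IH (step st a); case: st => stk out; rewrite /step /=.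
by have [j [-> _]] := feedE a stk out; exists (take j stk ++ r); rewrite catA.
Qed.

Lemma subseq_output_sT p q u w : uniq (p ++ q) ->
  u \in (run p).2 -> w \in q -> subseq [:: u; w] (sT T (p ++ q)).
Proof.
move=> upq uout wq; rewrite sT_run run_cat.
have [r flushE] := flush_foldl_prefix (run p) q.
have out_sub : {subset (run p).2 <= p}.
  by move=> z zout; rewrite -(perm_mem (flush_run_perm p)) mem_cat zout.
have wr : w \in r.
  have : w \in flush (foldl step (run p) q).
    by rewrite (perm_mem (flush_foldl_perm _ _)) mem_cat wq orbT.
  rewrite flushE mem_cat => /orP [/out_sub wp|//].
  by move: upq; rewrite cat_uniq => /and3P [_ /hasPn /(_ w wq)]; rewrite wp.
by rewrite flushE -cat1s; apply: cat_subseq; rewrite sub1seq.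
Qed.

Lemma feed_bottom a s Z out : avoids_all T (a :: Z) ->
  exists j, feed a (s ++ Z) out = (a :: (drop j s ++ Z), out ++ take j s).
Proof.
move=> aZ; elim: s out => [|b s IH] out /=.
  by exists 0; rewrite cats0; case: Z aZ => [|z Z] /= ->.
case: ifP => [_|_]; first by exists 0; rewrite drop0 take0 cats0.
by have [j ->] := IH (rcons out b); exists j.+1; rewrite /= cat_rcons.
Qed.

Lemma foldl_stack_bottom Z : (forall a, avoids_all T (a :: Z)) ->
  forall p st s, st.1 = s ++ Z -> exists s', (foldl step st p).1 = s' ++ Z.
Proof.
move=> Z_bottom; elim=> [|a p IH] [stk out] s /= ->; first by exists s.
have [j stepE] := feed_bottom s out (Z_bottom a).
by apply: (IH _ (a :: drop j s)); rewrite /step /= stepE.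
Qed.

End StackMachine.

(** * West's stack sort *)

Definition west_inv (inp stk out : seq nat) :=
  [/\ sorted ltn stk, sorted ltn out, {in out & stk ++ inp, forall u z, u < z},
      avoids (rev stk ++ inp) [:: 2; 3; 1] & uniq (out ++ stk ++ inp)].

Lemma west_inv_push a inp stk out : west_inv (a :: inp) stk out ->
  sorted ltn (a :: stk) -> west_inv inp (a :: stk) out.
Proof.
have memE : a :: stk ++ inp =i stk ++ a :: inp.
  by move=> z; rewrite inE !mem_cat inE orbCA.
case=> _ so out_lt no231 u sa; split => //.
- by move=> u' z u'out; rewrite memE; apply: out_lt.
- by rewrite rev_cons cat_rcons.
- rewrite (perm_uniq (_ : perm_eq _ (out ++ stk ++ a :: inp))) // perm_cat2l.
  by rewrite -[_ ++ inp]/([:: a] ++ stk ++ inp) perm_catCA.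
Qed.

Lemma west_inv_pop a b inp stk out : west_inv (a :: inp) (b :: stk) out -> b < a ->
  west_inv (a :: inp) stk (rcons out b).
Proof.
case=> sb so out_lt no231 u ba.
have b_lt : {in stk ++ a :: inp, forall z, b < z}.
  move=> z; rewrite mem_cat inE => /or3P [zs|/eqP ->//|zi].
    by move: sb; rewrite /= (path_sortedE ltn_trans) => /andP [/allP ->].
  rewrite ltn_neqAle leqNgt; apply/andP; split.
    by apply: contraTneq u => ->; rewrite cat_uniq /= mem_cat inE zi !orbT /= !andbF.
  apply: contraNN no231 => zb; apply/contains231P; exists b, a, z; split; last by rewrite zb ba.
  rewrite rev_cons cat_rcons; apply: subseq_trans (suffix_subseq _ _).
  by rewrite /= !eqxx sub1seq.
split.
- exact: path_sorted sb.
- by apply: sorted_rcons so _ => o oout; apply: out_lt; rewrite ?mem_head.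
- move=> u' z; rewrite mem_rcons inE => /orP [/eqP -> |u'out] zs; first exact: b_lt.
  by apply: out_lt; rewrite //= inE zs orbT.
- apply: contraNN no231; apply: contains_subseq.
  by rewrite rev_cons cat_rcons; apply: cat_subseq (subseq_refl _) (subseq_cons _ _).
- by rewrite cat_rcons.
Qed.

Lemma contains21_cons_sorted a b stk : sorted ltn (b :: stk) ->
  contains [:: a, b & stk] [:: 2; 1] -> b < a.
Proof.
move=> sb /contains21P [u [v [uvs vu]]]; case: (eqVneq u a) => [eua|nua].
  subst u; have /andP [_] := mem_subseq_pair uvs.
  rewrite in_cons (ltn_eqF vu) in_cons => /predU1P [<- //|vs].
  exact: ltn_trans (allP (order_path_min ltn_trans sb) v vs) vu.
move: uvs; rewrite subseq_consE (negbTE nua) => /(subseq_sorted ltn_trans)/(_ sb).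
by rewrite /= andbT ltnNge ltnW.
Qed.

Lemma west_inv_feed a inp stk out : west_inv (a :: inp) stk out ->
  west_inv inp (feed T21 a stk out).1 (feed T21 a stk out).2.
Proof.
elim: stk out => [|b stk IH] out inv /=; first exact: west_inv_push.
case: (inv) => sb _ _ _ u.
have a_notin : a \notin b :: stk.
  move: u; rewrite catA cat_uniq => /and3P [_ /hasPn /(_ a (mem_head _ _))].
  by rewrite mem_cat negb_or => /andP [].
have uab : uniq [:: a, b & stk].
  by rewrite cons_uniq a_notin (sorted_uniq ltn_trans ltnn sb).
rewrite andbT; case: ifP => [pushed|/negbFE blocked].
  by apply: west_inv_push inv _; apply: avoids21_sorted.
by apply/IH/west_inv_pop; last exact: contains21_cons_sorted blocked.
Qed.

Lemma west_inv_flush_sorted inp st : west_inv inp st.1 st.2 ->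
  sorted ltn (flush (foldl (step T21) st inp)).
Proof.
elim: inp st => [|a inp IH] [stk out] /= inv; last exact/IH/west_inv_feed.
case: inv => ss so out_lt _ _; rewrite /flush /= (sorted_pairwise ltn_trans).
rewrite pairwise_cat -!(sorted_pairwise ltn_trans) so ss !andbT.
by apply/allrelP => u z uo zs; apply: out_lt; rewrite ?cats0.
Qed.

Lemma west_sorted_avoids231 y : uniq y -> avoids y [:: 2; 3; 1] -> sorted ltn (west y).
Proof. by move=> uy no231; rewrite /west sT_run; apply: west_inv_flush_sorted. Qed.

Lemma output_run21_rcons p u v : u \in p -> u < v -> u \in (run T21 (rcons p v)).2.
Proof.
move=> up uv; have : u \in flush (run T21 (rcons p v)).
  by rewrite (perm_mem (flush_run_perm _ _)) mem_rcons inE up orbT.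
rewrite mem_cat => /orP [//|]; rewrite run_rcons.
have [D [-> pushed _]] := step_stack T21 (run T21 p) v.
rewrite in_cons (ltn_eqF uv) /= => uD; case: pushed => [|D0]; last by rewrite D0 in uD.
rewrite avoids_all_21 => /negP []; apply/contains21P; exists v, u.
by rewrite /= eqxx sub1seq.
Qed.

Lemma west_contains231 y : uniq y -> contains y [:: 2; 3; 1] -> ~~ sorted ltn (west y).
Proof.
move=> uy /contains231P [u [v [w [uvw /andP [wu uv]]]]].
have [s1 [r1 [yE vw]]] := subseq_cons_split uvw.
have [s2 [r2 [r1E wr2]]] := subseq_cons_split vw.
have {}yE : y = rcons (s1 ++ u :: s2) v ++ r2 by rewrite yE r1E cat_rcons -catA.
have uout : u \in (run T21 (rcons (s1 ++ u :: s2) v)).2.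
  by apply: output_run21_rcons; rewrite // mem_cat mem_head orbT.
have : subseq [:: u; w] (sT T21 y).
  by rewrite yE; apply: (subseq_output_sT _ uout); rewrite -?yE -?sub1seq.
move/(subseq_sorted ltn_trans) => uw_sorted; apply/negP => /uw_sorted.
by rewrite /= andbT ltnNge ltnW.
Qed.

Theorem west_sortedE y : uniq y -> sorted ltn (west y) = avoids y [:: 2; 3; 1].
Proof.
move=> uy; apply/idP/idP => [|/(west_sorted_avoids231 uy)//].
by apply: contraLR => /negbNE; apply: west_contains231.
Qed.

(** * Permutations containing 123 or 132* *)

Lemma cons_sorted_avoids a Z : sorted ltn Z -> avoids_all T132_321 (a :: Z).
Proof.
move=> sZ; rewrite avoids_all_132_321 /avoids.
apply/andP; split; apply/negP; [move/contains132P | move/contains321P];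
  move=> [u [v [t [/subseq_behead vtZ]]]];
  by have := subseq_sorted ltn_trans vtZ sZ; rewrite /= andbT; lia.
Qed.

Lemma avoids_min_sorted w R : uniq R -> {in R, forall z, w < z} ->
  avoids_all T132_321 (w :: R) -> sorted ltn R.
Proof.
rewrite avoids_all_132_321 => uR R_gt /andP [no132 _]; apply: avoids21_sorted => //.
apply: contraNN no132 => /contains21P [v [t [vtR tv]]]; apply/contains132P.
exists w, v, t; rewrite /= eqxx vtR R_gt //.
by case/andP: (mem_subseq_pair vtR).
Qed.

Lemma push_above_min t1 w q c : uniq (rcons t1 w ++ rcons q c) -> {in t1, forall z, w < z} ->
  exists R s, [/\ {subset R <= t1},
    (run T132_321 (rcons t1 w ++ rcons q c)).1 = c :: s ++ w :: R &
    avoids_all T132_321 (c :: s ++ w :: R)].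
Proof.
move=> ux t1_gt; have u1 : uniq (rcons t1 w) by move: ux; rewrite cat_uniq => /andP [].
have c_notin : c \notin rcons t1 w.
  move: ux; rewrite cat_uniq => /and3P [_ /hasPn c_out _].
  by apply: c_out; rewrite mem_rcons mem_head.
have [R [stkE pushed R_sub]] := step_stack T132_321 (run T132_321 t1) w.
have R_t1 : {subset R <= t1} by move=> z /R_sub /mem_stack_run.
have sR : sorted ltn (w :: R).
  have uwR : uniq (w :: R) by rewrite -stkE -run_rcons; apply: uniq_stack_run.
  have R_gt : {in R, forall z, w < z} by move=> z /R_t1 /t1_gt.
  rewrite /= (path_sortedE ltn_trans).
  apply/andP; split; first by apply/allP.
  by case: pushed => [|->//]; apply: avoids_min_sorted R_gt; case/andP: uwR.
have stk0 : (run T132_321 (rcons t1 w)).1 = [::] ++ w :: R by rewrite run_rcons stkE.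
have [s'] := foldl_stack_bottom (fun a => cons_sorted_avoids a sR) (rcons q c) stk0.
rewrite -run_cat -rcons_cat run_rcons.
have [D [-> pushedD _]] := step_stack T132_321 (run T132_321 (rcons t1 w ++ q)) c.
case: s' => [[cw _]|c' s [_ DE]]; first by rewrite cw mem_rcons mem_head in c_notin.
exists R, s; rewrite -DE; split => //; case: pushedD => // D0.
by move: DE; rewrite D0 => /(congr1 size); rewrite size_cat /= addnS.
Qed.

Lemma sT_contains231_split123 t1 w q c t4 b :
  uniq (rcons t1 w ++ rcons q c ++ t4) -> {in t1, forall z, w < z} -> b \in q ->
  w < b < c -> contains (sT T132_321 (rcons t1 w ++ rcons q c ++ t4)) [:: 2; 3; 1].
Proof.
rewrite catA => ux t1_gt bq /andP [wb bc]; set p := rcons t1 w ++ rcons q c in ux *.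
have up : uniq p by move: ux; rewrite cat_uniq => /andP [].
have [R [s [R_t1 stkE avoid]]] := push_above_min up t1_gt.
have b_notin_t1 : b \notin t1.
  move: up; rewrite cat_uniq => /and3P [_ /hasPn b_out _].
  have := b_out b; rewrite mem_rcons inE bq orbT => /(_ isT).
  by apply: contraNN => bt1; rewrite mem_rcons inE bt1 orbT.
have b_out : b \in (run T132_321 p).2.
  have : b \in flush (run T132_321 p).
    by rewrite (perm_mem (flush_run_perm _ _)) mem_cat !mem_rcons !inE bq !orbT.
  rewrite mem_cat stkE inE (ltn_eqF bc) mem_cat inE (gtn_eqF wb) /=.
  case/or3P => [//|bs|/R_t1 bt1]; last by rewrite bt1 in b_notin_t1.
  move: avoid; rewrite avoids_all_132_321 => /andP [_ /negP []].
  by apply/contains321P; exists c, b, w; rewrite /= eqxx subseq_pair_cat ?mem_head ?wb.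
apply/contains231P; exists b, c, w; split; last by rewrite wb bc.
apply: subseq_trans (flush_run_subseq_sT _ _ _); rewrite /flush stkE -cat1s.
by apply: cat_subseq; rewrite ?sub1seq //= eqxx sub1seq mem_cat mem_head orbT.
Qed.

Lemma cons_pred_avoids e D : uniq [:: e, e.+1 & D] ->
  avoids_all T132_321 (e.+1 :: D) -> avoids_all T132_321 [:: e, e.+1 & D].
Proof.
rewrite !cons_uniq in_cons negb_or !avoids_all_132_321 /avoids.
move=> /and3P [/andP [_ eD] e1D _] /andP [no132 no321]; apply/andP; split.
- apply: contraNN no132 => /contains132P [u [v [t []]]].
  rewrite subseq_consE; case: eqP => [-> vtD /andP [et tv]|_ uvtD uvt].
    2: by apply/contains132P; exists u, v, t.
  move: vtD; rewrite subseq_consE; case: eqP => [vE _|_ vtD]; first by rewrite vE in tv; lia.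
  have /andP [_ tD] := mem_subseq_pair vtD.
  apply/contains132P; exists e.+1, v, t; rewrite /= eqxx vtD tv andbT ltn_neqAle et.
  by rewrite andbT; split => //; apply: contraNneq e1D => ->.
- apply: contraNN no321 => /contains321P [u [v [t []]]].
  rewrite subseq_consE; case: eqP => [-> vtD /andP [tv ve]|_ uvtD uvt].
    2: by apply/contains321P; exists u, v, t.
  move: vtD; rewrite subseq_consE; case: eqP => [vE|_ vtD].
    by rewrite vE ltnNge leqnSn in ve.
  by apply/contains321P; exists e.+1, v, t; rewrite /= eqxx vtD tv ltnS ltnW.
Qed.

Lemma sT_contains231_split132star t1 w q e t3 :
  uniq (rcons t1 w ++ rcons q e.+1 ++ e :: t3) -> {in t1, forall z, w < z} -> w < e ->
  contains (sT T132_321 (rcons t1 w ++ rcons q e.+1 ++ e :: t3)) [:: 2; 3; 1].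
Proof.
rewrite catA => ux t1_gt we; set p := rcons t1 w ++ rcons q e.+1 in ux *.
have up : uniq p by move: ux; rewrite cat_uniq => /andP [].
have e_notin_p : e \notin p.
  by move: ux; rewrite cat_uniq => /and3P [_ /hasPn /(_ e (mem_head _ _))].
have [R [s [_ stkE avoid]]] := push_above_min up t1_gt.
have stk_e : (run T132_321 (rcons p e)).1 = [:: e, e.+1 & s ++ w :: R].
  rewrite run_rcons /step stkE feed_push //; apply: cons_pred_avoids avoid.
  rewrite cons_uniq -stkE (uniq_stack_run _ up) andbT.
  by apply: contraNN e_notin_p; apply: mem_stack_run.
apply/contains231P; exists e, e.+1, w; split; last by rewrite we ltnSn.
rewrite -cat_rcons; apply: subseq_trans (flush_run_subseq_sT _ _ _).
rewrite /flush stk_e; apply: subseq_trans (suffix_subseq _ _).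
by rewrite /= !eqxx sub1seq mem_cat mem_head orbT.
Qed.

Lemma sT_contains231_of_123 x : uniq x -> contains x [:: 1; 2; 3] ->
  contains (sT T132_321 x) [:: 2; 3; 1].
Proof.
move=> ux /contains123P [a [b [c [abc /andP [ab bc]]]]].
have [s1 [r1 [xE bc_r1]]] := subseq_cons_split abc.
have [s2 [r2 [r1E c_r2]]] := subseq_cons_split bc_r1.
have [s3 [t4 [r2E _]]] := subseq_cons_split c_r2.
have /split_at_min [t1 [w [t2 [aE t1_gt w_le]]]] : rcons s1 a != [::].
  by rewrite -size_eq0 size_rcons.
have {}xE : x = rcons t1 w ++ rcons (t2 ++ s2 ++ b :: s3) c ++ t4.
  by rewrite xE r1E r2E -cat_rcons aE -cats1 !cat_rcons -!catA.
rewrite xE in ux *; apply: (sT_contains231_split123 (b := b) ux t1_gt).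
  by rewrite !mem_cat mem_head !orbT.
by rewrite bc (leq_ltn_trans _ ab) // w_le // mem_rcons mem_head.
Qed.

Lemma sT_contains231_of_132star x : uniq x -> contains_132star x ->
  contains (sT T132_321 x) [:: 2; 3; 1].
Proof.
move=> ux /contains_132starP [p [a [q [xE /hasP [v vp va]]]]].
have /split_at_min [t1 [w [t2 [pE t1_gt w_le]]]] : p != [::] by apply: contraTneq vp => ->.
have {}xE : x = rcons t1 w ++ rcons t2 a.+1 ++ a :: q.
  by rewrite xE pE -cats1 !cat_rcons -!catA.
rewrite xE in ux *; apply: sT_contains231_split132star ux t1_gt _.
exact: leq_ltn_trans (w_le v vp) va.
Qed.

(** * Permutations avoiding 123 and 132* *)

Definition nonlrmin (p : seq nat) z := exists2 w, subseq [:: w; z] p & w < z.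

Lemma nonlrmin_rcons p a z : nonlrmin p z -> nonlrmin (rcons p a) z.
Proof. by case=> w wz ltwz; exists w => //; apply: subseq_trans wz (subseq_rcons _ _). Qed.

Lemma nonlrmin_mem p z : nonlrmin p z -> z \in p.
Proof. by case=> w /mem_subseq_pair/andP []. Qed.

Record invariant (p opt L out : seq nat) : Prop := {
  inv_opt : opt = [::] \/ exists p0 l, opt = [:: l] /\ p = rcons p0 l;
  inv_L_sorted : sorted ltn L;
  inv_L_sub : {subset L <= p};
  inv_lrmin : {in p, forall v, ~ nonlrmin p v -> v \in L};
  inv_out_sorted : sorted gtn (out ++ opt);
  inv_out_nonlrmin : {in out ++ opt, forall z, nonlrmin p z} }.

Section Avoiders.

Variables (n : nat) (x : seq nat).
Hypotheses (x_perm : perm_eq x (iota 1 n)) (x_no123 : avoids x [:: 1; 2; 3])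
  (x_no132star : ~~ contains_132star x).

Let x_uniq : uniq x.
Proof. by rewrite (perm_uniq x_perm) iota_uniq. Qed.

Lemma notin_prefix p a q : x = p ++ a :: q -> a \notin p.
Proof.
by move=> xE; move: x_uniq; rewrite xE cat_uniq => /and3P [_ /hasPn /(_ a (mem_head _ _))].
Qed.

Lemma nonlrmin_gt p a q z : x = p ++ a :: q -> nonlrmin p z -> a < z.
Proof.
move=> xE zp; have z_in_p := nonlrmin_mem zp; case: zp => w wz wltz.
rewrite ltn_neqAle; apply/andP; split.
  by apply: contraTneq z_in_p => <-; apply: notin_prefix xE.
rewrite leqNgt; apply: contraNN x_no123 => za; apply/contains123P; exists w, z, a.
rewrite wltz za xE -[[:: w; z; a]]/([:: w; z] ++ [:: a]); split => //.
by apply: cat_subseq wz _; rewrite sub1seq mem_head.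
Qed.

Lemma lrmin_lt_prefix p a q : x = p ++ a :: q -> ~~ has (fun w => w < a) p ->
  {in p, forall z, a < z}.
Proof.
move=> xE /hasPn a_le z zp; rewrite ltn_neqAle leqNgt a_le // andbT.
by apply: contraNneq (notin_prefix xE) => ->.
Qed.

Lemma succ_mem_prefix p a q l : x = p ++ a :: q -> has (fun w => w < a) p -> a < l -> l \in p ->
  a.+1 \in p.
Proof.
move=> xE /hasP [w wp wa] al lp.
have : a.+1 \in x.
  have : l \in x by rewrite xE mem_cat lp.
  rewrite !(perm_mem x_perm) !mem_iota => /andP [_ ln].
  by rewrite ltnS leq0n; apply: leq_ltn_trans ln.
rewrite xE mem_cat inE eqn_leq ltnn /= => /orP [//|a1q]; apply: contraNT x_no123 => _.
apply/contains123P; exists w, a, a.+1; rewrite wa ltnSn xE; split => //.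
by apply: (@cat_subseq _ [:: w]); rewrite ?sub1seq // subseq_consE eqxx sub1seq.
Qed.

Lemma pop_witness_nonlrmin p0 l a q L out : x = rcons p0 l ++ a :: q ->
  invariant (rcons p0 l) [:: l] L out -> has (fun w => w < a) (rcons p0 l) ->
  exists2 v, v \in L & a < v < l.
Proof.
move=> xE inv has_lt; have lp : l \in rcons p0 l by rewrite mem_rcons mem_head.
have al : a < l by apply: nonlrmin_gt xE (inv_out_nonlrmin inv _); rewrite mem_cat mem_head orbT.
have a1p := succ_mem_prefix xE has_lt al lp.
have a1l : a.+1 != l.
  apply: contraNneq x_no132star => lE; apply/contains_132starP; exists p0, a, q.
  rewrite xE -lE cat_rcons; split => //; case/hasP: has_lt => w; rewrite mem_rcons inE -lE.
  by case/predU1P => [-> |wp0 wa]; [rewrite ltnNge leqnSn | apply/hasP; exists w].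
exists a.+1; last by rewrite ltnSn ltn_neqAle a1l.
apply: (inv_lrmin inv a1p) => [[w wa1 w_lt]]; case/negP: x_no123.
apply/contains123P; exists w, a.+1, l; split; last by rewrite w_lt ltn_neqAle a1l.
rewrite xE; apply: subseq_trans (prefix_subseq _ _).
have wa1p0 : subseq [:: w; a.+1] p0 := subseq_rcons_neq (s := [:: w]) wa1 a1l.
by rewrite -[[:: w; a.+1; l]]/([:: w; a.+1] ++ [:: l]) -cats1; apply: cat_subseq wa1p0 _.
Qed.

Lemma pop_witness_lrmin p0 l a q L out : x = rcons p0 l ++ a :: q ->
  invariant (rcons p0 l) [:: l] L out -> ~~ has (fun w => w < a) (rcons p0 l) ->
  exists2 v, v \in L & a < v < l.
Proof.
move=> xE inv no_lt; have /split_at_min [t1 [m [t2 [pE _ m_le]]]] : rcons p0 l != [::].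
  by rewrite -size_eq0 size_rcons.
have mp : m \in rcons p0 l by rewrite pE mem_cat mem_head orbT.
exists m.
  apply: (inv_lrmin inv mp) => [[w /mem_subseq_pair/andP [/m_le wm _] w_lt]].
  by move: (leq_ltn_trans wm w_lt); rewrite ltnn.
rewrite (lrmin_lt_prefix xE no_lt mp) /=.
have [w /mem_subseq_pair/andP [/m_le mw _] w_lt] := inv_out_nonlrmin inv (mem_rcons_last out l).
exact: leq_ltn_trans mw w_lt.
Qed.

Lemma step_invariantE p a q opt L out : x = p ++ a :: q -> invariant p opt L out ->
  step T132_321 (opt ++ L, out) a = (a :: L, out ++ opt).
Proof.
move=> xE inv; rewrite /step /=; have sL := inv_L_sorted inv.
case: (inv_opt inv) => [oE | [p0 [l [oE pE]]]]; subst opt.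
  by rewrite cats0 feed_push ?cons_sorted_avoids.
subst p; have [v vL /andP [av vl]] : exists2 v, v \in L & a < v < l.
  case: (boolP (has (fun w => w < a) (rcons p0 l))).
    exact: pop_witness_nonlrmin xE inv.
  exact: pop_witness_lrmin xE inv.
have blocked : ~~ avoids_all T132_321 [:: a, l & L].
  rewrite avoids_all_132_321 /avoids negb_and negbK; apply/orP; left; apply/contains132P.
  by exists a, l, v; rewrite av vl !subseq_consE !eqxx sub1seq.
by rewrite feed_pop // feed_push ?cats1 // cons_sorted_avoids.
Qed.

Lemma invariant_rcons_nonlrmin p a q opt L out : x = p ++ a :: q ->
  has (fun w => w < a) p -> invariant p opt L out ->
  invariant (rcons p a) [:: a] L (out ++ opt).
Proof.
move=> xE /hasP [w wp wa] inv; have a_nonlrmin : nonlrmin (rcons p a) a.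
  by exists w; rewrite // -cats1; apply: (@cat_subseq _ [:: w]); rewrite ?sub1seq ?mem_head.
split.
- by right; exists p, a.
- exact: inv_L_sorted inv.
- by move=> z /(inv_L_sub inv) zp; rewrite mem_rcons inE zp orbT.
- move=> v; rewrite mem_rcons inE => /predU1P [-> //|vp v_lrmin].
  by apply: (inv_lrmin inv vp) => /(nonlrmin_rcons a).
- rewrite cats1; apply: sorted_rcons (inv_out_sorted inv) _ => z /(inv_out_nonlrmin inv).
  exact: nonlrmin_gt xE.
- move=> z; rewrite mem_cat inE => /orP [/(inv_out_nonlrmin inv)|/eqP -> //].
  exact: nonlrmin_rcons.
Qed.

Lemma invariant_rcons_lrmin p a q opt L out : x = p ++ a :: q ->
  ~~ has (fun w => w < a) p -> invariant p opt L out ->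
  invariant (rcons p a) [::] (a :: L) (out ++ opt).
Proof.
move=> xE no_lt inv; have a_lt := lrmin_lt_prefix xE no_lt.
split.
- by left.
- rewrite /= (path_sortedE ltn_trans) (inv_L_sorted inv) andbT.
  by apply/allP => z /(inv_L_sub inv)/a_lt.
- move=> z; rewrite inE mem_rcons inE => /predU1P [->|/(inv_L_sub inv) ->].
    by rewrite eqxx.
  by rewrite orbT.
- move=> v; rewrite mem_rcons !inE => /predU1P [-> //|vp v_lrmin]; first by rewrite eqxx.
  by rewrite (inv_lrmin inv vp) ?orbT // => /(nonlrmin_rcons a).
- by rewrite cats0; apply: inv_out_sorted inv.
- by move=> z; rewrite cats0 => /(inv_out_nonlrmin inv); apply: nonlrmin_rcons.
Qed.

Lemma run_invariant p q : x = p ++ q ->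
  exists opt L out, run T132_321 p = (opt ++ L, out) /\ invariant p opt L out.
Proof.
elim/last_ind: p q => [|p a IH] q xE.
  by exists [::], [::], [::]; split => //; split => //; left.
have {}xE : x = p ++ a :: q by rewrite xE cat_rcons.
have [opt [L [out [runE inv]]]] := IH _ xE.
rewrite run_rcons runE (step_invariantE xE inv).
case: (boolP (has (fun w => w < a) p)) => [has_lt|no_lt].
  by exists [:: a], L, (out ++ opt); split; last exact: invariant_rcons_nonlrmin xE has_lt inv.
by exists [::], (a :: L), (out ++ opt); split; last exact: invariant_rcons_lrmin xE no_lt inv.
Qed.

Lemma sT_avoids231 : avoids (sT T132_321 x) [:: 2; 3; 1].
Proof.
have [opt [L [out [runE inv]]]] := run_invariant (esym (cats0 x)).
rewrite sT_run runE /flush /= catA.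
exact: dec_inc_avoids231 (inv_out_sorted inv) (inv_L_sorted inv).
Qed.

End Avoiders.

Theorem theorem3p7 (n : nat) (x : seq nat) :
  in_Sort_132_321 n x = in_Av_123_132star n x.
Proof.
rewrite /in_Sort_132_321 /in_Av_123_132star; case x_perm: (is_perm n x) => //=.
have ux : uniq x by rewrite (perm_uniq x_perm) iota_uniq.
have uy : uniq (sT T132_321 x) by rewrite (perm_uniq (sT_perm _ x)).
have west_perm : perm_eq (west (sT T132_321 x)) (iota 1 n).
  exact: perm_trans (sT_perm _ _) (perm_trans (sT_perm _ _) x_perm).
rewrite (perm_iota_sortedE west_perm) west_sortedE //.
apply/idP/andP => [no231|[no123 no_star]]; last exact: sT_avoids231 x_perm no123 no_star.
by split; apply: contraNN no231; [apply: sT_contains231_of_123 | apply: sT_contains231_of_132star].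
Qed.
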